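(* Let $0\le\gamma<\alpha<\infty$. There exists a constant $C(\gamma,\alpha)>0$ such that for all $\zeta\in\overline{\mathbb{D}}$ and all $0<r<1$, $$D^{-\gamma}\frac{1}{|1-r\zeta|^{\alpha}}\le\frac{C(\gamma,\alpha)}{|1-r\zeta|^{\alpha-\gamma}},$$ where the fractional integral is taken in the variable $r$ (with $\zeta$ fixed).
   Context: $\mathbb{D}$ is the open unit disk. For a function $u$ integrable on $(0,a)$ and $\gamma>0$, the Riemann–Liouville fractional integral is $D^{-\gamma}u(r)=\frac{1}{\Gamma(\gamma)}\int_0^r (r-x)^{\gamma-1}u(x)\,dx$, $0<r<a$; and $D^{0}u=u$. Thus for $\gamma>0$ the left-hand side equals $\frac{1}{\Gamma(\gamma)}\int_0^r (r-x)^{\gamma-1}|1-x\zeta|^{-\alpha}\,dx$. *)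

From HB Require Import structures.
From mathcomp Require Import all_boot all_order all_algebra.
From mathcomp Require Import all_classical all_reals all_analysis.
From mathcomp Require Import complex.

Set Implicit Arguments.
Unset Strict Implicit.
Unset Printing Implicit Defensive.
Import Order.TTheory GRing.Theory Num.Theory.
Import numFieldNormedType.Exports.
Local Open Scope classical_set_scope.
Local Open Scope ring_scope.

Definition cmod (R : realType) (z : R[i]) : R := Normc.normc z.

Definition Gamma (R : realType) (g : R) : R :=
  fine (\int[@lebesgue_measure R]_(t in `]0%R, +oo[%classic)
          (powR t (g - 1) * expR (- t))%:E)%E.

(* Riemann-Liouville fractional integral D^{-g} u (r), for g >= 0;
   D^0 u = u.  Extended-real valued (Lebesgue integral). *)
Definition RL_int (R : realType) (g : R) (u : R -> R) (r : R) : \bar R :=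
  if g == 0 then (u r)%:E
  else (((Gamma g)^-1)%:E *
       \int[@lebesgue_measure R]_(x in `]0%R, r[%classic)
          (powR (r - x) (g - 1) * u x)%:E)%E.

(* Write d(x) = |1 - x zeta|.  For |zeta| <= 1 and 0 < x < r the triangle
   inequality gives d(x) >= 1 - x >= r - x and d(x) >= d(r) - (r - x).  Split
   ]0, r[ at r - a with a = d(r) / 2.  Left of the split point, d(x) >= r - x
   and the integrand is at most (r - x)^(gamma - alpha - 1), whose integral
   over ]-oo, r - a] is a^(gamma - alpha) / (alpha - gamma).  Right of it,
   d(x) >= a and the integrand is at most a^(-alpha) (r - x)^(gamma - 1), whose
   integral is a^(-alpha) a^gamma / gamma.  Both terms are multiples of
   a^(gamma - alpha) = 2^(alpha - gamma) / d(r)^(alpha - gamma). *)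

From HB Require Import structures.
From mathcomp Require Import all_boot all_order all_algebra.
From mathcomp Require Import all_classical all_reals all_analysis.
From mathcomp Require Import complex measurable_realfun.
From mathcomp Require Import lra ring.
Import Order.TTheory GRing.Theory Num.Theory.
Import numFieldNormedType.Exports.
Local Open Scope classical_set_scope.
Local Open Scope ring_scope.

Section PowRSub.
Context {R : realType}.
Implicit Types r p q u v x : R.

Lemma derivable_powR_sub r p x : x < r -> derivable (fun y => powR (r - y) p) x 1.
Proof.
move=> xr; apply/derivable1_diffP.
apply: (@differentiable_comp _ _ _ _ (fun y => r - y) (@powR R ^~ p)).
  by apply/derivable1_diffP; apply: derivableB.
by apply/derivable1_diffP; apply: derivable_powR; rewrite in_itv /= andbT subr_gt0.
Qed.

Lemma measurable_powR_sub r p : measurable_fun setT (fun y : R => powR (r - y) p).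
Proof.
have -> : (fun y => powR (r - y) p) = (@powR R ^~ p) \o (fun y => r - y) by [].
by apply: measurableT_comp => //; exact: measurable_funB.
Qed.

Definition powR_sub_primitive r q y : R := powR (r - y) q / - q.

Lemma derive1_powR_sub_primitive r q x : q != 0 -> x < r ->
  (powR_sub_primitive r q)^`()%classic x = powR (r - x) (q - 1).
Proof.
move=> q0 xr; rewrite /powR_sub_primitive derive1Mr; last exact: derivable_powR_sub.
have -> : (fun y => powR (r - y) q) = (@powR R ^~ q) \o (fun y => r - y) by [].
rewrite derive1_comp; last 2 first.
- exact: derivableB.
- by apply: derivable_powR; rewrite in_itv /= andbT subr_gt0.
rewrite powR_derive1; last by rewrite in_itv /= andbT subr_gt0.
rewrite derive1E deriveB // derive_cst derive_id sub0r.
by rewrite mulrN1 invrN mulrNN mulrC mulrA mulVf // mul1r.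
Qed.

Lemma integral_powR_sub r q u v : q != 0 -> u < v -> v < r ->
  (\int[@lebesgue_measure R]_(x in `[u, v]) (powR (r - x) (q - 1))%:E =
   (powR_sub_primitive r q v)%:E - (powR_sub_primitive r q u)%:E)%E.
Proof.
move=> q0 uv vr.
have derF x : x < r -> derivable (powR_sub_primitive r q) x 1.
  by move=> xr; apply: derivableM => //; exact: derivable_powR_sub.
have contF x : x < r -> {for x, continuous (powR_sub_primitive r q)}.
  by move=> xr; apply: differentiable_continuous; apply/derivable1_diffP; exact: derF.
apply: continuous_FTC2 => //.
- apply: continuous_in_subspaceT => x; rewrite inE /= in_itv /= => /andP[_ xv].
  apply: differentiable_continuous; apply/derivable1_diffP.
  by apply: derivable_powR_sub; exact: le_lt_trans xv vr.
- split.
  + by move=> x; rewrite in_itv /= => /andP[_ xv]; apply: derF; exact: lt_trans xv vr.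
  + by apply: cvg_at_right_filter; apply: contF; exact: lt_trans uv vr.
  + by apply: cvg_at_left_filter; exact: contF.
- move=> x; rewrite in_itv /= => /andP[_ xv].
  by apply: derive1_powR_sub_primitive => //; exact: lt_trans xv vr.
Qed.

End PowRSub.

Section ImproperBound.
Context {R : realType}.
Local Notation mu := (@lebesgue_measure R).
Local Open Scope ereal_scope.

Lemma ge0_integral_le_itv_exhaustion (f : R -> R) (u v : nat -> R) (S : set R)
    (L : \bar R) :
  measurable S -> measurable_fun setT f ->
  (forall n, (u n.+1 <= u n)%R) -> (forall n, (v n <= v n.+1)%R) ->
  S `<=` \bigcup_n `[u n, v n]%classic ->
  (forall n x, (u n <= x <= v n)%R -> (0 <= f x)%R) ->
  (forall n, \int[mu]_(x in `[u n, v n]%classic) (f x)%:E <= L) ->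
  \int[mu]_(x in S) (f x)%:E <= L.
Proof.
move=> mS mf un vn SB f0 IL.
have mI n : measurable `[u n, v n]%classic by [].
have mB : measurable (\bigcup_n `[u n, v n]%classic) by exact: bigcupT_measurable.
have mfE D : measurable D -> measurable_fun D (fun x => (f x)%:E).
  by move=> mD; apply/measurable_EFinP; exact: measurable_funS mf.
have B0 x : (\bigcup_n `[u n, v n]%classic) x -> 0 <= (f x)%:E.
  by move=> [n _]; rewrite /= in_itv /= => /f0; rewrite lee_fin.
apply: le_trans (ge0_subset_integral mu mS mB (mfE _ mB) B0 SB) _.
have nd : {homo (fun n => `[u n, v n]%classic) : n m / (n <= m)%N >-> (n <= m)%O}.
  apply/nondecreasing_seqP => n; rewrite subsetEset => x /=; rewrite !in_itv /=.
  by move=> /andP[h1 h2]; rewrite (le_trans (un n) h1) (le_trans h2 (vn n)).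
have := ge0_nondecreasing_set_cvg_integral (mu := mu) nd mI (fun n => mfE _ (mI n))
  (fun n x h => B0 x (ex_intro2 _ _ n I h)).
by move/cvge_to_le; apply; apply: nearW.
Qed.

Lemma integral_powR_sub_ray_le (r a q : R) : (0 < a)%R -> (q < 0)%R ->
  \int[mu]_(x in `]-oo, (r - a)%R]%classic) (powR (r - x) (q - 1))%:E <=
  (powR a q / - q)%:E.
Proof.
move=> a0 q0.
apply: (@ge0_integral_le_itv_exhaustion _ (fun n => r - a - n.+1%:R)%R
  (fun=> r - a)%R) => //.
- exact: measurable_powR_sub.
- by move=> n; rewrite lerD2l lerN2 ler_nat.
- move=> x; rewrite /= in_itv /= => xra.
  exists (Num.trunc (r - a - x)) => //=; rewrite in_itv /= xra andbT.
  by rewrite lerBlDr -lerBlDl ltW // truncnS_gt.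
- by move=> n x _; exact: powR_ge0.
- move=> n; rewrite integral_powR_sub ?lt_eqF //; last 2 first.
  + by rewrite ltrBlDr ltrDl ltr0n.
  + by rewrite ltrBlDr ltrDl.
  rewrite -EFinB lee_fin /powR_sub_primitive subKr.
  by rewrite gerBl mulr_ge0 ?powR_ge0 // invr_ge0 oppr_ge0 ltW.
Qed.

Lemma integral_powR_sub_end_le (r a q : R) : (0 < a)%R -> (0 < q)%R ->
  \int[mu]_(x in `](r - a)%R, r[%classic) (powR (r - x) (q - 1))%:E <=
  (powR a q / q)%:E.
Proof.
move=> a0 q0.
apply: (@ge0_integral_le_itv_exhaustion _ (fun=> r - a)%R
  (fun n => r - a / n.+2%:R)%R) => //.
- exact: measurable_powR_sub.
- by move=> n; rewrite lerD2l lerN2 ler_pM2l // lef_pV2 ?posrE ?ltr0n // ler_nat.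
- move=> x; rewrite /= in_itv /= => /andP[rax xr].
  exists (Num.trunc (a / (r - x))) => //=; rewrite in_itv /= (ltW rax) /=.
  have rx0 : (0 < r - x)%R by rewrite subr_gt0.
  have := truncnS_gt (a / (r - x)); rewrite ltr_pdivrMr // => h.
  rewrite lerBrDr -lerBrDl ler_pdivrMr ?ltr0n //; apply: ltW.
  by apply: (lt_le_trans h); rewrite mulrC ler_pM2l // ler_nat.
- by move=> n x _; exact: powR_ge0.
- move=> n; rewrite integral_powR_sub ?gt_eqF //; last 2 first.
  + by rewrite ltrD2l ltrN2 ltr_pdivrMr ?ltr0n // ltr_pMr // ltr1n.
  + by rewrite ltrBlDr ltrDl divr_gt0.
  rewrite -EFinB lee_fin /powR_sub_primitive opprB addrC subKr.
  rewrite (addrC r) subrK invrN mulrN opprK addrC.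
  have : (0 <= (a / n.+2%:R) `^ q * q^-1)%R by rewrite mulr_ge0 ?powR_ge0 // invr_ge0 ltW.
  lra.
Qed.

End ImproperBound.

Lemma ler_powRN {R : realType} (x y p : R) : 0 < x -> x <= y -> 0 <= p ->
  powR y (- p) <= powR x (- p).
Proof.
move=> x0 xy p0; have y0 := lt_le_trans x0 xy.
rewrite !powRN lef_pV2 ?posrE ?powR_gt0 //.
by apply: ge0_ler_powR => //; rewrite nnegrE ltW.
Qed.

Section Dist1.
Context {R : realType}.
Implicit Types (zeta : R[i]) (x r : R).

Definition dist1 zeta x : R := cmod (1 - (x%:C)%C * zeta).

Lemma cmod_real x : cmod (x%:C)%C = `|x|.
Proof. by rewrite /cmod /= expr0n /= addr0 sqrtr_sqr. Qed.

Lemma dist1_ge zeta x : cmod zeta <= 1 -> 0 <= x -> 1 - x <= dist1 zeta x.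
Proof.
move=> z1 x0; rewrite /dist1.
have := le_normcD (1 - (x%:C)%C * zeta) ((x%:C)%C * zeta).
rewrite subrK Normc.normc1 Normc.normcM -!/(cmod _) cmod_real ger0_norm //.
suff : x * cmod zeta <= x by lra.
by rewrite ler_piMr.
Qed.

Lemma dist1_gt0 zeta x : cmod zeta <= 1 -> 0 <= x < 1 -> 0 < dist1 zeta x.
Proof. by move=> z1 /andP[x0 x1]; have := dist1_ge _ _ z1 x0; lra. Qed.

Lemma dist1_le_addr zeta x r : cmod zeta <= 1 -> x <= r ->
  dist1 zeta r <= dist1 zeta x + (r - x).
Proof.
move=> z1 xr; rewrite /dist1.
have -> : 1 - (r%:C)%C * zeta = 1 - (x%:C)%C * zeta + ((x - r)%:C)%C * zeta.
  have -> : ((x - r)%:C)%C = (x%:C)%C - (r%:C)%C :> R[i] by rewrite raddfB.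
  ring.
apply: le_trans (le_normcD _ _) _.
rewrite Normc.normcM -!/(cmod _) cmod_real lerD2l distrC ger0_norm ?subr_ge0 //.
by rewrite ler_piMr // subr_ge0.
Qed.

Lemma measurable_dist1 zeta : measurable_fun setT (dist1 zeta).
Proof.
case: zeta => a b; rewrite /dist1 /cmod /=.
apply: measurableT_comp; first exact: continuous_measurable_fun (@sqrt_continuous R).
apply: measurable_funD; apply: measurable_funX; apply: measurable_funB => //.
  by apply: measurable_funB => //; exact: measurable_funM.
by apply: measurable_funD => //; exact: measurable_funM.
Qed.

End Dist1.

Section KernelBound.
Context {R : realType} {zeta : R[i]} {r gamma alpha : R}.
Hypotheses (gamma_gt0 : 0 < gamma) (gamma_lt_alpha : gamma < alpha).
Hypotheses (zeta_le1 : cmod zeta <= 1) (r_gt0 : 0 < r) (r_lt1 : r < 1).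
Local Notation mu := (@lebesgue_measure R).

Let a := dist1 zeta r / 2.
Let g x := powR (r - x) (gamma - 1) * powR (dist1 zeta x) (- alpha).

Let a_gt0 : 0 < a.
Proof. by rewrite divr_gt0 // dist1_gt0 // ltW // r_gt0 r_lt1. Qed.

Let alpha_ge0 : 0 <= alpha.
Proof. exact/ltW/(lt_trans gamma_gt0). Qed.

Let g_ge0 x : 0 <= g x.
Proof. by rewrite mulr_ge0 ?powR_ge0. Qed.

Let measurable_g : measurable_fun setT g.
Proof.
apply: measurable_funM; first exact: measurable_powR_sub.
have -> : (fun x => powR (dist1 zeta x) (- alpha)) =
  (@powR R ^~ (- alpha)) \o dist1 zeta by [].
by apply: measurableT_comp => //; exact: measurable_dist1.
Qed.

Let measurable_gE (S : set R) : measurable S -> measurable_fun S (fun x => (g x)%:E).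
Proof. by move=> mS; apply/measurable_EFinP; exact: measurable_funS measurable_g. Qed.

Let measurable_powR_subE (p : R) (S : set R) : measurable S ->
  measurable_fun S (fun x => (powR (r - x) p)%:E).
Proof.
by move=> mS; apply/measurable_EFinP; exact: measurable_funS (measurable_powR_sub r p).
Qed.

Let dist1_ge_sub x : 0 < x < r -> r - x <= dist1 zeta x.
Proof.
by case/andP=> x0 xr; have := dist1_ge _ _ zeta_le1 (ltW x0); move: r_lt1; lra.
Qed.

Let dist1_ge_half x : 0 < x < r -> a <= dist1 zeta x.
Proof.
case/andP=> x0 xr; have := dist1_le_addr _ _ _ zeta_le1 (ltW xr).
have := dist1_ge _ _ zeta_le1 (ltW x0); rewrite /a; move: r_lt1; lra.
Qed.

Local Open Scope ereal_scope.

Lemma integral_kernel_far_le :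
  \int[mu]_(x in `]0%R, r[%classic `&` `]-oo, (r - a)%R]%classic) (g x)%:E <=
  (powR a (gamma - alpha) / (alpha - gamma))%:E.
Proof.
apply: (@le_trans _ _ (\int[mu]_(x in `]0%R, r[%classic `&` `]-oo, (r - a)%R]%classic)
    (powR (r - x) ((gamma - alpha) - 1))%:E)).
  apply: ge0_le_integral => //.
  - exact: measurableI.
  - by move=> x _; rewrite lee_fin.
  - by apply: measurable_gE; exact: measurableI.
  - by apply: measurable_powR_subE; exact: measurableI.
  move=> x []; rewrite /= !in_itv /= => xD _; rewrite lee_fin /g.
  have rx0 : (0 < r - x)%R by case/andP: xD => _ xr; rewrite subr_gt0.
  rewrite (_ : (gamma - alpha - 1 = (gamma - 1) + - alpha)%R); last by ring.
  rewrite [leRHS]powRD ?(gt_eqF rx0) ?implybT // ler_wpM2l ?powR_ge0 //.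
  by apply: ler_powRN => //; exact: dist1_ge_sub.
apply: (@le_trans _ _ (\int[mu]_(x in `]-oo, (r - a)%R]%classic)
    (powR (r - x) (gamma - alpha - 1))%:E)).
  apply: ge0_subset_integral => //.
  - exact: measurableI.
  - exact: measurable_powR_subE.
  - by move=> x _; rewrite lee_fin powR_ge0.
by rewrite -[X in (_ / X)%R]opprB; apply: integral_powR_sub_ray_le; rewrite // subr_lt0.
Qed.

Lemma integral_kernel_near_le :
  \int[mu]_(x in `]0%R, r[%classic `&` `](r - a)%R, r[%classic) (g x)%:E <=
  (powR a (- alpha) * (powR a gamma / gamma))%:E.
Proof.
apply: (@le_trans _ _ (\int[mu]_(x in `]0%R, r[%classic `&` `](r - a)%R, r[%classic)
    (powR a (- alpha) * powR (r - x) (gamma - 1))%:E)).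
  apply: ge0_le_integral => //.
  - exact: measurableI.
  - by move=> x _; rewrite lee_fin.
  - by apply: measurable_gE; exact: measurableI.
  - apply/measurable_EFinP; apply: measurable_funM => //.
    exact: measurable_funS (measurable_powR_sub r _).
  move=> x []; rewrite /= !in_itv /= => xD _; rewrite lee_fin /g mulrC.
  by rewrite ler_wpM2r ?powR_ge0 // ler_powRN // dist1_ge_half.
under eq_integral do rewrite EFinM.
rewrite ge0_integralZl_EFin ?powR_ge0 //; first last.
- by apply: measurable_powR_subE; exact: measurableI.
- by move=> x _; rewrite lee_fin powR_ge0.
- exact: measurableI.
rewrite EFinM lee_wpmul2l ?lee_fin ?powR_ge0 //.
apply: (@le_trans _ _ (\int[mu]_(x in `](r - a)%R, r[%classic)
    (powR (r - x) (gamma - 1))%:E)).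
  apply: ge0_subset_integral => //.
  - exact: measurableI.
  - exact: measurable_powR_subE.
  - by move=> x _; rewrite lee_fin powR_ge0.
exact: integral_powR_sub_end_le.
Qed.

Lemma integral_kernel_le :
  \int[mu]_(x in `]0%R, r[%classic) (g x)%:E <=
  (powR a (gamma - alpha) * ((alpha - gamma)^-1 + gamma^-1))%:E.
Proof.
have split_at : `]0%R, r[%classic = (`]0%R, r[%classic `&` `]-oo, (r - a)%R]%classic)
    `|` (`]0%R, r[%classic `&` `](r - a)%R, r[%classic).
  rewrite -setIUr; apply/esym/setIidPl => x; rewrite /= !in_itv /= => /andP[_ xr].
  by case: (leP x (r - a)%R) => h; [left | right].
rewrite split_at ge0_integral_setU //; first last.
- apply/disj_setPS => x [[_]]; rewrite /= !in_itv /= => xra [_ /andP[rax _]].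
  by move: (lt_le_trans rax xra); rewrite ltxx.
- by move=> x _; rewrite lee_fin.
- by apply: measurable_gE; apply: measurableU; exact: measurableI.
- exact: measurableI.
- exact: measurableI.
rewrite mulrDr EFinD; apply: leeD; first exact: integral_kernel_far_le.
suff -> : (powR a (gamma - alpha) * gamma^-1 =
    powR a (- alpha) * (powR a gamma / gamma))%R by exact: integral_kernel_near_le.
by rewrite mulrA -powRD ?(gt_eqF a_gt0) ?implybT // addrC.
Qed.

End KernelBound.

Lemma powR_halfN {R : realType} (x p : R) : 0 <= x ->
  powR (x / 2) (- p) = powR 2 p / powR x p.
Proof.
move=> x0; have two_gt0 : 0 < powR 2 p :> R by rewrite powR_gt0.
have inv2 : powR 2^-1 p = (powR 2 p)^-1 :> R.
  apply: (mulIf (x := powR 2 p)); first by rewrite gt_eqF.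
  by rewrite -powRM ?invr_ge0 // mulVf ?pnatr_eq0 // powR1 mulVf ?gt_eqF.
by rewrite powRN powRM ?invr_ge0 // inv2 invfM invrK mulrC.
Qed.

Lemma EFin_mul_le_abs {R : realType} (c b : R) (I : \bar R) :
  (0 <= I -> I <= b%:E -> c%:E * I <= (`|c| * b)%:E)%E.
Proof.
case: I => [i | | ] //= i0 ib; rewrite lee_fin in i0 ib *.
apply: le_trans (ler_wpM2r i0 (ler_norm c)) _.
by rewrite ler_wpM2l.
Qed.

Theorem lemma2 (R : realType) (gamma alpha : R) :
  0 <= gamma -> gamma < alpha ->
  exists C : R, 0 < C /\
    forall (zeta : R[i]) (r : R), cmod zeta <= 1 -> 0 < r < 1 ->
      (RL_int gamma (fun x => powR (cmod (1 - (x%:C)%C * zeta)%R) (- alpha)%R) r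
        <= (C /  powR (cmod (1 - (r%:C)%C * zeta)%R) (alpha - gamma)%R)%:E)%E.
Proof.
move=> gamma_ge0 gamma_lt_alpha.
have [-> | gamma_neq0] := eqVneq gamma 0.
  exists 1; split => // zeta r _ _.
  by rewrite /RL_int eqxx lee_fin subr0 powRN mul1r.
have gamma_gt0 : 0 < gamma by rewrite lt_def gamma_neq0.
set K := powR 2 (alpha - gamma) * ((alpha - gamma)^-1 + gamma^-1).
have K_gt0 : 0 < K by rewrite mulr_gt0 ?powR_gt0 // addr_gt0 ?invr_gt0 ?subr_gt0.
(* [Gamma] is defined through [fine]. *)
exists ((`|(Gamma gamma)^-1| + 1) * K); split; first by rewrite mulr_gt0 ?ltr_wpDl.
move=> zeta r zeta_le1 /andP[r_gt0 r_lt1].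
have d_gt0 : 0 < dist1 zeta r by rewrite dist1_gt0 // ltW // r_gt0.
have bound := integral_kernel_le gamma_gt0 gamma_lt_alpha zeta_le1 r_gt0 r_lt1.
rewrite -[gamma - alpha]opprB (powR_halfN _ _ (ltW d_gt0)) mulrAC -/K in bound.
rewrite /RL_int (negbTE gamma_neq0).
apply: le_trans (EFin_mul_le_abs _ _ _ _ bound) _.
  by apply: integral_ge0 => x _; rewrite lee_fin mulr_ge0 ?powR_ge0.
rewrite lee_fin -[leRHS]mulrA ler_wpM2r ?lerDl //.
by rewrite divr_ge0 ?powR_ge0 ?ltW.
Qed.
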